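(* For all integers $m\ge 2$, $n\ge 2$, the state complexity of the combined operation $L(M)^*\cup L(N)$, where $M$ ranges over complete DFAs with $m$ states and $N$ over complete DFAs with $n$ states (over a common alphabet), is exactly $\frac{3}{4}2^m\cdot n-n+1$. That is, for every such $M,N$ some DFA with at most $\frac{3}{4}2^m\cdot n-n+1$ states accepts $L(M)^*\cup L(N)$, and there exist such $M,N$ for which the minimal complete DFA of $L(M)^*\cup L(N)$ has exactly $\frac{3}{4}2^m\cdot n-n+1$ states.
   Context: DFAs are complete deterministic finite automata $(Q,\Sigma,\delta,s,F)$; $L(M)$ is the accepted language; $L^*$ is the Kleene star. The state complexity of a regular language is the number of states of its minimal complete DFA; the state complexity of an operation is the maximum state complexity of its result over all argument DFAs of the given sizes. *)

From mathcomp Require Import all_boot.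
Set Implicit Arguments. Unset Strict Implicit. Unset Printing Implicit Defensive.

Record dfa (S : finType) (k : nat) := DFA {
  delta : 'I_k -> S -> 'I_k;
  start : 'I_k;
  final : {set 'I_k}
}.

Definition dfa_run (S : finType) (k : nat) (A : dfa S k) (q : 'I_k) (w : seq S) : 'I_k :=
  foldl (delta A) q w.

Definition accepts (S : finType) (k : nat) (A : dfa S k) (w : seq S) : Prop :=
  dfa_run A (start A) w \in final A.

Definition kstar (S : finType) (L : seq S -> Prop) (w : seq S) : Prop :=
  exists ws : seq (seq S), flatten ws = w /\ (forall u, u \in ws -> L u).

Definition star_union (S : finType) (m n : nat) (M : dfa S m) (N : dfa S n)
  (w : seq S) : Prop :=
  kstar (accepts M) w \/ accepts N w.

Definition recognizes (S : finType) (k : nat) (D : dfa S k) (L : seq S -> Prop) : Prop :=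
  forall w, accepts D w <-> L w.

Definition sc_eq (S : finType) (L : seq S -> Prop) (k : nat) : Prop :=
  (exists D : dfa S k, recognizes D L) /\
  (forall j (D : dfa S j), recognizes D L -> k <= j).

(* (3/4) 2^m n - n + 1, written over nat for m >= 2. *)
Definition sc_bound (m n : nat) : nat := 3 * 2 ^ (m - 2) * n - n + 1.

From mathcomp Require Import all_boot zify.
Set Implicit Arguments. Unset Strict Implicit. Unset Printing Implicit Defensive.

(* A DFA for L(M)^* ∪ L(N) runs, in parallel with N, the subset construction
   for the star in which a set of states of M that meets the final states is
   enlarged by the start state s of M, and adds a fresh accepting initial state.
   Every reachable set X is nonempty and satisfies "X meets F ==> s \in X".  If
   some final state f differs from s, this rules out, besides the empty set, the
   2^(m-2) sets containing f but not s; otherwise only singletons are reachable.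
   Either way there are at most (3 2^(m-2) - 1) n + 1 states.  For the lower
   bound, let the letters be all pairs of transformations of the two state sets
   and give both automata start state 0 and final state 1: a shift followed by a
   suitable "collapsing" letter reaches every admissible pair (X, q), and any two
   distinct states are separated by a single letter. *)

Section DfaSize.
Variable S : finType.

Lemma dfa_of_closed_set (T : finType) (d : T -> S -> T) (t0 : T) (acc : pred T)
    (R : {set T}) :
  t0 \in R -> (forall t a, t \in R -> d t a \in R) ->
  exists D : dfa S #|R|, forall w, accepts D w <-> acc (foldl d t0 w).
Proof.
move=> R0 closedR.
pose D := DFA (fun i a => enum_rank_in R0 (d (enum_val i) a)) (enum_rank_in R0 t0)
  [set i | acc (enum_val i)].
exists D => w.
have runE t : t \in R -> enum_val (dfa_run D (enum_rank_in R0 t) w) = foldl d t w.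
  elim: w t => [|a w IHw] t Rt; rewrite /dfa_run /= enum_rankK_in //.
  exact: IHw (closedR _ _ Rt).
by rewrite /accepts inE runE.
Qed.

Lemma dfa_widen k j (D : dfa S k) : k <= j ->
  exists D' : dfa S j, forall w, accepts D' w <-> accepts D w.
Proof.
move=> le_kj; pose up := widen_ord le_kj.
pose down (q : 'I_j) : 'I_k := insubd (start D) (val q).
have upK : cancel up down by move=> x; apply: val_inj; rewrite val_insubd /= ltn_ord.
pose D' := DFA (fun q a => up (delta D (down q) a)) (up (start D)) (up @: final D).
exists D' => w; rewrite /accepts /=.
have runE x : dfa_run D' (up x) w = up (dfa_run D x w).
  by elim: w x => [|a w IHw] x //; rewrite /dfa_run /= upK; exact: IHw.
by rewrite runE mem_imset //; exact: can_inj upK.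
Qed.

Lemma dfa_run_cat k (D : dfa S k) q u v :
  dfa_run D q (u ++ v) = dfa_run D (dfa_run D q u) v.
Proof. exact: foldl_cat. Qed.

Lemma distinguishable_card_le (L : seq S -> Prop) (T : finType) (R : {set T})
    (word : T -> seq S) :
  {in R &, forall t1 t2, t1 != t2 ->
     exists z, ~ (L (word t1 ++ z) <-> L (word t2 ++ z))} ->
  forall j (D : dfa S j), recognizes D L -> #|R| <= j.
Proof.
move=> dist j D recD.
pose reach t := dfa_run D (start D) (word t).
rewrite -(card_in_imset (f := reach)).
  by apply: leq_trans (max_card _) _; rewrite card_ord.
move=> t1 t2 R1 R2 eq_reach; apply/eqP/negP => /negP neq12.
have [z] := dist _ _ R1 R2 neq12; apply.
by rewrite -!recD /accepts !dfa_run_cat -/(reach t1) -/(reach t2) eq_reach.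
Qed.

End DfaSize.

Section KleeneStar.
Variables (S : finType) (L : seq S -> Prop).

Lemma kstar_nil : kstar L [::].
Proof. by exists [::]. Qed.

Lemma kstar_cat u v : L u -> kstar L v -> kstar L (u ++ v).
Proof.
move=> Lu [ws [<- Lws]]; exists (u :: ws); split=> // x.
by rewrite inE => /predU1P [-> //|]; exact: Lws.
Qed.

Lemma kstar_cons_inv a w : kstar L (a :: w) ->
  exists u v, w = u ++ v /\ L (a :: u) /\ kstar L v.
Proof.
move=> [ws []]; elim: ws => [//|[|b x] ws IHws] /= ws_w Lws.
  by apply: IHws ws_w _ => u u_ws; apply: Lws; rewrite inE u_ws orbT.
case: ws_w => <- <-; exists x, (flatten ws); split=> //; split.
  by apply: Lws; rewrite inE eqxx.
by exists ws; split=> // u u_ws; apply: Lws; rewrite inE u_ws orbT.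
Qed.

End KleeneStar.

Section StarUnionAutomaton.
Variables (S : finType) (m n : nat) (M : dfa S m) (N : dfa S n).
Implicit Types (X : {set 'I_m}) (PS : {set {set 'I_m}}).

Definition star_step (X : {set 'I_m}) (a : S) : {set 'I_m} :=
  if [set delta M x a | x in X] :&: final M != set0
  then start M |: [set delta M x a | x in X] else [set delta M x a | x in X].

(* [None] is the fresh initial state; it behaves like [Some ([set start M],
   start N)] except that it is accepting. *)
Local Notation state := (option ({set 'I_m} * 'I_n)).

Definition su_delta (t : state) (a : S) : state :=
  match t with
  | None => Some (star_step [set start M] a, delta N (start N) a)
  | Some (X, q) => Some (star_step X a, delta N q a)
  end.

Definition su_final (t : state) : bool :=
  if t is Some (X, q) then (X :&: final M != set0) || (q \in final N) else true.

Definition star_closed (X : {set 'I_m}) : bool :=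
  (X :&: final M != set0) ==> (start M \in X).

Definition star_lang (X : {set 'I_m}) (w : seq S) : Prop :=
  exists2 x, x \in X & exists u v,
    [/\ w = u ++ v, dfa_run M x u \in final M & kstar (accepts M) v].

Lemma mem_star_step X a x : x \in X -> delta M x a \in star_step X a.
Proof.
move=> Xx; have Yx : delta M x a \in [set delta M x a | x in X] by exact: imset_f.
by rewrite /star_step; case: ifP; rewrite // in_setU1 Yx orbT.
Qed.

Lemma star_stepP X a y : y \in star_step X a ->
  (exists2 x, x \in X & y = delta M x a) \/
  (y = start M /\ exists2 x, x \in X & delta M x a \in final M).
Proof.
rewrite /star_step; case: ifP => [/set0Pn [z /setIP [/imsetP [x Xx ->] Fz]] | _].
  by rewrite in_setU1 => /predU1P [->|/imsetP]; [right; split=> //; exists x | left].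
by move/imsetP; left.
Qed.

Lemma star_closed_step X a : star_closed (star_step X a).
Proof.
rewrite /star_closed /star_step; case: ifP => [_|/negbT].
  by rewrite in_setU1 eqxx implybT.
by rewrite negbK => /eqP ->; rewrite eqxx.
Qed.

Lemma star_step_meets X a :
  (star_step X a :&: final M != set0) =
  ([set delta M x a | x in X] :&: final M != set0).
Proof.
rewrite /star_step; case: ifP => // /set0Pn [z /setIP [Yz Fz]].
by apply/set0Pn; exists z; rewrite inE in_setU1 Yz orbT.
Qed.

Lemma star_lang_nil X : star_lang X [::] <-> X :&: final M != set0.
Proof.
split=> [[x Xx [u [v [uv_nil Fu _]]]] | /set0Pn [x /setIP [Xx Fx]]].
  by case: u uv_nil Fu => // _ Fx; apply/set0Pn; exists x; rewrite inE Xx.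
by exists x => //; exists [::], [::]; split=> //; exact: kstar_nil.
Qed.

(* When X already accepts, the next factor of the star is read from
   [start M]; [star_closed] guarantees that this state is in X. *)
Lemma star_lang_cons X a w : star_closed X ->
  star_lang X (a :: w) <-> star_lang (star_step X a) w.
Proof.
move=> closedX; split.
  move=> [x Xx [[|b u] [v [/= w_uv Fu Lv]]]]; last first.
    case: w_uv => -> ->; exists (delta M x b); first exact: mem_star_step.
    by exists u, v.
  have Xs : start M \in X.
    by apply: (implyP closedX); apply/set0Pn; exists x; rewrite inE Xx.
  rewrite -w_uv in Lv; have [u' [v' [-> [Lu' Lv']]]] := kstar_cons_inv Lv.
  by exists (delta M (start M) a); [exact: mem_star_step | exists u', v'].
move=> [y /star_stepP [[x Xx ->]|[-> [x Xx Fx]]] [u [v [-> Fu Lv]]]].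
  by exists x => //; exists (a :: u), v.
by exists x => //; exists [:: a], (u ++ v); split=> //; exact: kstar_cat.
Qed.

Lemma star_langE X w : star_closed X ->
  star_lang X w <-> foldl star_step X w :&: final M != set0.
Proof.
elim: w X => [|a w IHw] X closedX; first exact: star_lang_nil.
by rewrite star_lang_cons //; exact: IHw (star_closed_step X a).
Qed.

Lemma star_lang_start a w :
  star_lang [set start M] (a :: w) <-> kstar (accepts M) (a :: w).
Proof.
split=> [[x /set1P -> [u [v [-> Fu Lv]]]] | /kstar_cons_inv [u [v [-> [Lu Lv]]]]].
  exact: kstar_cat.
by exists (start M); [rewrite inE | exists (a :: u), v].
Qed.

Lemma su_foldl_some X q w :
  foldl su_delta (Some (X, q)) w = Some (foldl star_step X w, dfa_run N q w).
Proof. by elim: w X q => [|a w IHw] X q //=; rewrite IHw. Qed.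

Lemma su_final_foldl w : su_final (foldl su_delta None w) <-> star_union M N w.
Proof.
case: w => [|a w]; first by split=> // _; left; exact: kstar_nil.
rewrite /= su_foldl_some /= /star_union -star_lang_start star_lang_cons; last first.
  by rewrite /star_closed in_set1 eqxx implybT.
rewrite star_langE; last exact: star_closed_step.
by split=> [/orP [] ?|[] ->]; rewrite ?orbT; [left|right| |].
Qed.

Definition su_states (PS : {set {set 'I_m}}) : {set state} :=
  None |: (Some @: setX PS [set: 'I_n]).

Lemma card_su_states PS : #|su_states PS| = 1 + #|PS| * n.
Proof.
rewrite /su_states cardsU1 card_imset; last by move=> ? ? [].
rewrite cardsX cardsT card_ord; congr (_ + _).
by apply/eqP; rewrite eqb1; apply/imsetP => -[].
Qed.

Lemma mem_su_states_some PS X q : (Some (X, q) \in su_states PS) = (X \in PS).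
Proof.
rewrite /su_states in_setU1 /= mem_imset; last by move=> ? ? [].
by rewrite !inE andbT.
Qed.

Lemma star_union_dfa (PS : {set {set 'I_m}}) :
  (forall a, star_step [set start M] a \in PS) ->
  (forall X a, X \in PS -> star_step X a \in PS) ->
  exists D : dfa S (1 + #|PS| * n), recognizes D (star_union M N).
Proof.
move=> PS_start PS_step; rewrite -card_su_states.
have [|t a|D recD] := @dfa_of_closed_set S _ su_delta None su_final (su_states PS).
- by rewrite in_setU1 eqxx.
- by case: t => [[X q]|]; rewrite !mem_su_states_some; [exact: PS_step | move=> _].
- by exists D => w; rewrite recD; exact: su_final_foldl.
Qed.

End StarUnionAutomaton.

Lemma card_set_ord m : #|{set 'I_m}| = 2 ^ m.
Proof. by rewrite -cardsT -powersetT card_powerset cardsT card_ord. Qed.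

Section GuardedSets.
Variables (m : nat) (f s : 'I_m).
Hypothesis neq_fs : f != s.

Definition guarded : {set {set 'I_m}} :=
  [set X : {set 'I_m} | (X != set0) && ((f \in X) ==> (s \in X))].

Definition unguarded : {set {set 'I_m}} :=
  [set X : {set 'I_m} | (f \in X) && (s \notin X)].

Lemma guardedE : guarded = ~: (set0 |: unguarded).
Proof.
apply/setP => X; rewrite !inE negb_or negb_and negbK.
by case: (f \in X); rewrite ?andbT.
Qed.

Lemma two_le_m : 2 <= m.
Proof. by have := max_card [set f; s]; rewrite cards2 neq_fs card_ord. Qed.

Lemma card_unguarded : #|unguarded| = 2 ^ (m - 2).
Proof.
pose C := ~: [set f; s].
have cardC : #|C| = m - 2.
  by have := cardsC [set f; s]; rewrite /C cards2 neq_fs card_ord; lia.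
have Cf (Z : {set 'I_m}) : Z \subset C -> f \notin Z.
  by move/subsetP=> sZC; apply/negP => /sZC; rewrite !inE eqxx.
have -> : unguarded = [set f |: Z | Z in powerset C].
  apply/setP => X; rewrite inE; apply/andP/imsetP => [[fX sX]|[Z]].
    exists (X :\ f); last by rewrite setD1K.
    rewrite powersetE; apply/subsetP => y; rewrite !inE negb_or => /andP [-> yX].
    by apply: contraNN sX => /eqP <-.
  rewrite powersetE => sZC ->; rewrite setU11; split=> //.
  rewrite in_setU1 negb_or eq_sym neq_fs; apply/negP => /(subsetP sZC).
  by rewrite !inE eqxx orbT.
rewrite card_in_imset ?card_powerset ?cardC // => Z1 Z2.
by rewrite !powersetE => /Cf f1 /Cf f2 eqZ; rewrite -(setU1K f1) eqZ setU1K.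
Qed.

Lemma card_guarded : #|guarded| = 3 * 2 ^ (m - 2) - 1.
Proof.
have unguarded0 : set0 \notin unguarded by rewrite inE in_set0.
rewrite guardedE cardsCs setCK cardsU1 unguarded0 card_unguarded card_set_ord.
by rewrite -(subnK two_le_m) expnD addnK; lia.
Qed.

End GuardedSets.

Definition singletons m : {set {set 'I_m}} := [set [set x] | x : 'I_m].

Lemma card_singletons_le m : #|singletons m| <= m.
Proof. by rewrite -[m in _ <= m]card_ord leq_imset_card. Qed.

Lemma leq_3exp2_sub1 m : 2 <= m -> m <= 3 * 2 ^ (m - 2) - 1.
Proof.
move=> hm; rewrite -{1}(subnK hm).
by elim: (m - 2) => [|k IHk] //; rewrite expnS; lia.
Qed.

Lemma sc_boundE m n : sc_bound m n = 1 + (3 * 2 ^ (m - 2) - 1) * n.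
Proof. by rewrite /sc_bound mulnBl mul1n addnC. Qed.

Section UpperBound.
Variables (S : finType) (m n : nat) (M : dfa S m) (N : dfa S n).

Lemma star_step_singleton x a : final M \subset [set start M] ->
  star_step M [set x] a \in singletons m.
Proof.
move/subsetP=> F_s; rewrite /star_step imset_set1.
case: ifP => [/set0Pn [y /setIP [/set1P -> /F_s /set1P ->]] | _]; last exact: imset_f.
by rewrite setUid; exact: imset_f.
Qed.

Lemma star_step_guarded f X a : f \in final M ->
  X \in guarded f (start M) -> star_step M X a \in guarded f (start M).
Proof.
move=> Ff; rewrite !inE /star_step => /andP [X0 _]; case: ifP => [_|/negbT].
  by rewrite setU11 implybT andbT; apply/set0Pn; exists (start M); rewrite setU11.
by rewrite negbK imset_eq0 X0 => /eqP /setP /(_ f); rewrite !inE Ff andbT => ->.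
Qed.

Lemma star_union_upper : 2 <= m ->
  exists k, k <= sc_bound m n /\ exists D : dfa S k, recognizes D (star_union M N).
Proof.
move=> hm.
have [PS [PS_start PS_step card_PS]] : exists PS : {set {set 'I_m}},
    [/\ forall a, star_step M [set start M] a \in PS,
        forall X a, X \in PS -> star_step M X a \in PS
      & #|PS| <= 3 * 2 ^ (m - 2) - 1].
  have [F_s | /subsetPn [f Ff /set1P /eqP neq_fs]] :=
    boolP (final M \subset [set start M]).
    exists (singletons m); split.
    - by move=> a; exact: star_step_singleton.
    - by move=> X a /imsetP [x _ ->]; exact: star_step_singleton.
    - exact: leq_trans (card_singletons_le m) (leq_3exp2_sub1 hm).
  exists (guarded f (start M)); split.
  - move=> a; apply: star_step_guarded; rewrite // inE set11 implybT andbT.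
    by apply/set0Pn; exists (start M); rewrite set11.
  - by move=> X a; exact: star_step_guarded.
  - by rewrite card_guarded.
have [D recD] := star_union_dfa N PS_start PS_step.
exists (1 + #|PS| * n); split; last by exists D.
by rewrite sc_boundE leq_add2l leq_mul2r card_PS orbT.
Qed.

End UpperBound.

Definition ord0_of k (lt1k : 1 < k) : 'I_k := Ordinal (ltnW lt1k).
Definition ord1_of k (lt1k : 1 < k) : 'I_k := Ordinal lt1k.

Lemma setI1_neq0 (T : finType) (Y : {set T}) y : (Y :&: [set y] != set0) = (y \in Y).
Proof.
apply/set0Pn/idP => [[z /setIP [Yz /set1P <- //]] | Yy].
by exists y; rewrite inE Yy set11.
Qed.

Section Witness.
Variables (m n : nat) (hm : 1 < m) (hn : 1 < n).

Local Notation letter := ({ffun 'I_m -> 'I_m} * {ffun 'I_n -> 'I_n})%type.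
Local Notation s0 := (ord0_of hm).
Local Notation s1 := (ord1_of hm).
Local Notation q0 := (ord0_of hn).
Local Notation q1 := (ord1_of hn).

Definition witnessM : dfa letter m := DFA (fun x (a : letter) => a.1 x) s0 [set s1].
Definition witnessN : dfa letter n := DFA (fun q (a : letter) => a.2 q) q0 [set q1].

Local Notation step := (su_delta witnessM witnessN).
Local Notation final := (su_final witnessM witnessN).
Local Notation reachable := (su_states n (guarded s1 s0)).

Definition shift : letter := ([ffun x : 'I_m => insubd s0 x.+1], [ffun q => q]).

Definition prefix_set k : {set 'I_m} := [set x : 'I_m | x < k].

Lemma star_step_shift k : 0 < k < m ->
  star_step witnessM (prefix_set k) shift = prefix_set k.+1.
Proof.
case/andP=> k0 km.
have shiftE (x : 'I_m) : x < k -> val (shift.1 x) = x.+1.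
  by move=> xk; rewrite ffunE val_insubd (leq_ltn_trans xk km).
have imageE : [set delta witnessM x shift | x in prefix_set k] =
              [set y : 'I_m | 0 < y <= k].
  apply/setP => y; rewrite inE; apply/imsetP/idP => [[x] | /andP [y0 yk]].
    by rewrite inE => xk ->; rewrite /= shiftE.
  have ltym : y.-1 < m by rewrite (leq_ltn_trans (leq_pred y)).
  exists (Ordinal ltym); first by rewrite inE /= prednK.
  by apply: val_inj; rewrite /= shiftE /= prednK.
rewrite /star_step imageE ifT; last by rewrite setI1_neq0 inE /= k0.
apply/setP => y; rewrite in_setU1 !inE ltnS.
case: (y =P s0) => [-> // | /eqP y_s0].
have y0 : 0 < y by rewrite lt0n; apply: contraNneq y_s0 => y0; apply/eqP/val_inj.
by rewrite /= y0.
Qed.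

Lemma foldl_star_step_shift j k : 0 < k -> k + j <= m ->
  foldl (star_step witnessM) (prefix_set k) (nseq j shift) = prefix_set (k + j).
Proof.
elim: j k => [|j IHj] k k0 kjm; first by rewrite addn0.
by rewrite /= star_step_shift ?k0 //= -?addSnnS ?IHj //; lia.
Qed.

Lemma prefix_set1 : prefix_set 1 = [set s0].
Proof.
by apply/setP => y; rewrite !inE ltnS leqn0; apply/eqP/eqP => [?|->] //; exact: val_inj.
Qed.

Lemma prefix_setT : prefix_set m = [set: 'I_m].
Proof. by apply/setP => y; rewrite !inE ltn_ord. Qed.

Definition collapse (X : {set 'I_m}) (q : 'I_n) : letter :=
  ([ffun y => if y \in X then y else odflt s0 [pick x in X]], [ffun _ => q]).

Lemma star_step_collapse X q : X \in guarded s1 s0 ->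
  star_step witnessM [set: 'I_m] (collapse X q) = X.
Proof.
rewrite inE => /andP [X0 X1_0].
have imageE : [set delta witnessM x (collapse X q) | x in [set: 'I_m]] = X.
  apply/setP => y; apply/imsetP/idP => [[x _ ->] | Xy].
    rewrite /= ffunE; case: ifP => // _; case: pickP => [// | noneX].
    by case/set0Pn: X0 => z; rewrite noneX.
  by exists y; rewrite ?in_setT //= ffunE Xy.
rewrite /star_step imageE setI1_neq0; case: ifP => // /(implyP X1_0) X0s.
by apply/setUidPr; rewrite sub1set.
Qed.

Definition witness_word (t : option ({set 'I_m} * 'I_n)) : seq letter :=
  if t is Some (X, q) then rcons (nseq m.-1 shift) (collapse X q) else [::].

Lemma witness_word_reaches t :
  t \in reachable -> foldl step None (witness_word t) = t.
Proof.
case: t => [[X q]|] //; rewrite mem_su_states_some => gX.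
rewrite /witness_word (_ : m.-1 = (m - 2).+1); last by lia.
rewrite /= su_foldl_some foldl_rcons -prefix_set1 star_step_shift ?hm //.
rewrite foldl_star_step_shift ?subnKC // prefix_setT star_step_collapse //.
by rewrite /dfa_run foldl_rcons /= ffunE.
Qed.

Lemma su_final_step X q (a : letter) :
  final (step (Some (X, q)) a) = (s1 \in [set a.1 x | x in X]) || (a.2 q == q1).
Proof. by rewrite /= star_step_meets setI1_neq0 in_set1. Qed.

Definition point (x : 'I_m) : letter :=
  ([ffun y => if y == x then s1 else s0], [ffun _ => q0]).
Definition qpoint (p : 'I_n) : letter :=
  ([ffun _ => s0], [ffun y => if y == p then q1 else q0]).

Lemma su_final_point X q x : final (step (Some (X, q)) (point x)) = (x \in X).
Proof.
rewrite su_final_step !ffunE orbF; apply/imsetP/idP => [[y Xy] | Xx].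
  by rewrite ffunE; case: eqP => [<- |].
by exists x; rewrite // ffunE eqxx.
Qed.

Lemma su_final_qpoint X q p : final (step (Some (X, q)) (qpoint p)) = (q == p).
Proof.
rewrite su_final_step !ffunE; case: (q =P p) => _; rewrite ?eqxx ?orbT // orbF.
by apply/negbTE/imsetP => -[y _]; rewrite ffunE.
Qed.

Lemma separating_letter X1 q1' X2 q2' : (X1, q1') != (X2, q2') ->
  exists a, final (step (Some (X1, q1')) a) != final (step (Some (X2, q2')) a).
Proof.
have [/existsP [x neqX] | /existsPn eqX] :=
  boolP [exists x, (x \in X1) != (x \in X2)].
  by exists (point x); rewrite !su_final_point.
have -> : X2 = X1 by apply/setP => x; have /negPn/eqP := eqX x.
move=> neq_q; exists (qpoint q1'); rewrite !su_final_qpoint eqxx.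
by apply: contra neq_q => /eqP/esym/eqP ->.
Qed.

Lemma separated_from_initial X q :
  exists z, final (foldl step None z) != final (foldl step (Some (X, q)) z).
Proof.
have [<- | neq] := eqVneq ([set s0], q0) (X, q).
  by exists [::]; rewrite /= setI1_neq0 !in_set1.
by have [a] := separating_letter neq; exists [:: a].
Qed.

Lemma su_states_separated t1 t2 : t1 != t2 ->
  exists z, final (foldl step t1 z) != final (foldl step t2 z).
Proof.
case: t1 t2 => [[X1 q1']|] [[X2 q2']|] // neq.
- by have [a] := separating_letter neq; exists [:: a].
- by have [z] := separated_from_initial X1 q1'; exists z; rewrite eq_sym.
- exact: separated_from_initial.
Qed.

Lemma witness_sc_eq : sc_eq (star_union witnessM witnessN) (sc_bound m n).
Proof.
split.
  have [k [le_k [D recD]]] := star_union_upper witnessM witnessN hm.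
  have [D' recD'] := dfa_widen D le_k.
  by exists D' => w; rewrite recD'; exact: recD.
move=> j D recD.
have -> : sc_bound m n = #|reachable| by rewrite sc_boundE card_su_states card_guarded.
apply: distinguishable_card_le recD => t1 t2 R1 R2 /su_states_separated [z neq].
have acceptsE t : t \in reachable ->
    star_union witnessM witnessN (witness_word t ++ z) <-> final (foldl step t z).
  move=> Rt; have := su_final_foldl witnessM witnessN (witness_word t ++ z).
  by rewrite foldl_cat witness_word_reaches //; exact: iff_sym.
exists z => iff12; move/negP: neq; apply; apply/eqP; apply/idP/idP.
  by move/(acceptsE _ R1)/iff12/(acceptsE _ R2).
by move/(acceptsE _ R2)/iff12/(acceptsE _ R1).
Qed.

End Witness.

Theorem theorem3 (m n : nat) (hm : 2 <= m) (hn : 2 <= n) :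
  (forall (S : finType) (M : dfa S m) (N : dfa S n),
     exists k, k <= sc_bound m n /\
       exists D : dfa S k, recognizes D (star_union M N)) /\
  (exists (S : finType) (M : dfa S m) (N : dfa S n),
     sc_eq (star_union M N) (sc_bound m n)).
Proof.
split; first by move=> S M N; exact: star_union_upper.
by exists _, (witnessM n hm), (witnessN m hn); exact: witness_sc_eq.
Qed.
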